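(* Let $\Sigma=(\mathbf{ex},\mathbf{fx},B)$ and $\Sigma'=(\mathbf{ex}',\mathbf{fx}',B')$ be seeds and $f:\mathcal A(\Sigma)\to\mathcal A(\Sigma')$ a rooted cluster morphism. Then: (1) the inclusion of the initial cluster of the image seed $f(\Sigma)$ into $\mathbf x'=\mathbf{ex}'\sqcup\mathbf{fx}'$ induces an injective rooted cluster morphism $\mathcal A(f(\Sigma))\to\mathcal A(\Sigma')$, so $\mathcal A(f(\Sigma))$ is a rooted cluster subalgebra of $\mathcal A(\Sigma')$; (2) if $f$ is ideal, then $f$ is the composition of a surjective rooted cluster morphism $\mathcal A(\Sigma)\to\mathcal A(f(\Sigma))$ and the injective rooted cluster morphism $\mathcal A(f(\Sigma))\to\mathcal A(\Sigma')$ of (1).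
   Context: A seed is a triple $\Sigma=(\mathbf{ex},\mathbf{fx},B)$ where $\mathbf{ex},\mathbf{fx}$ are disjoint finite or countable sets of indeterminates (exchangeable resp. frozen), $\mathbf x=\mathbf{ex}\sqcup\mathbf{fx}$, and $B=(b_{yz})_{y\in\mathbf x,z\in\mathbf{ex}}$ a locally finite integer matrix with skew-symmetrizable square part on $\mathbf{ex}\times\mathbf{ex}$. Mutation $\mu_x$ at $x\in\mathbf{ex}$: replace $x$ by $x'$ with $xx'=\prod_{b_{yx}>0}y^{b_{yx}}+\prod_{b_{yx}<0}y^{-b_{yx}}$, mutate $B$ by Fomin–Zelevinsky matrix mutation. $\mathcal A(\Sigma)$: $\Sigma$ with the $\mathbb Z$-subalgebra of $\mathbb Q(\mathbf x)$ generated by all cluster variables of seeds reachable by iterated mutations at exchangeable variables. A rooted cluster morphism $f:\mathcal A(\Sigma)\to\mathcal A(\Sigma')$ is a ring homomorphism with (CM1) $f(\mathbf{ex})\subseteq\mathbf{ex}'\sqcup\mathbb Z$, (CM2) $f(\mathbf{fx})\subseteq\mathbf x'\sqcup\mathbb Z$, (CM3) $f(\mu_{x_l}\circ\cdots\circ\mu_{x_1,\Sigma}(y))=\mu_{f(x_l)}\circ\cdots\circ\mu_{f(x_1),\Sigma'}(f(y))$ for all $y\in\mathbf x$ and all $\Sigma$-admissible mutation sequences whose image is $\Sigma'$-admissible (RHS read as $f(y)$ if $f(y)\in\mathbb Z$). Image seed: $f(\Sigma)=(\mathbf{ex}'\cap f(\mathbf{ex}),(\mathbf x'\cap f(\mathbf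 x))\setminus(\mathbf{ex}'\cap f(\mathbf{ex})),B'[\mathbf x'\cap f(\mathbf x)])$, where $B'[S]$ has rows indexed by $S$ and columns by $\mathbf{ex}'\cap f(\mathbf{ex})$. Always $\mathcal A(f(\Sigma))\subseteq f(\mathcal A(\Sigma))$; $f$ is ideal if equality holds. Rooted cluster subalgebra: source of an injective rooted cluster morphism. *)

From HB Require Import structures.
From mathcomp Require Import all_boot all_order all_algebra.
From Stdlib Require Import ClassicalEpsilon.
Set Implicit Arguments. Unset Strict Implicit. Unset Printing Implicit Defensive.
Import Order.TTheory GRing.Theory Num.Theory.
Local Open Scope ring_scope.

Definition asbool (P : Prop) : bool :=
  if excluded_middle_informative P then true else false.

(* The initial cluster variables are
   elements of F, and they are also used as the *labels* (positions) of the
   cluster; mutation changes the variable sitting at a label but never the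
   set of exchangeable / frozen labels. *)
Record seed (F : fieldType) := Seed {
  sex : pred F;
  sfx : pred F;
  sB  : F -> F -> int      (* b_{yz}, relevant for y in x, z in ex *)
}.

Section Seeds.
Variable F : fieldType.
Implicit Types (S : seed F).

Definition sx S : pred F := fun y => sex S y || sfx S y.

(* algebraic independence over Z of the elements of P, spelled out with
   integer polynomials given by distinct exponent vectors *)
Definition mono_eval (xs : seq F) (e : seq nat) : F :=
  \prod_(i < size xs) xs`_i ^+ nth 0%N e i.

Definition alg_indep (P : pred F) : Prop :=
  forall (xs : seq F) (terms : seq (int * seq nat)),
    uniq xs -> all P xs ->
    all (fun t => size t.2 == size xs) terms ->
    uniq (map snd terms) ->
    all (fun t => t.1 != 0) terms ->
    terms != [::] ->
    \sum_(t <- terms) t.1%:~R * mono_eval xs t.2 != 0.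

Definition countable_pred (P : pred F) : Prop :=
  exists g : F -> nat, {in P &, injective g}.

(* (ex, fx, B) is a seed of the field of rational functions Q(x) (realised
   inside F, where x is algebraically independent) *)
Definition is_seed S : Prop :=
  [/\ (forall y, ~~ (sex S y && sfx S y)),
      countable_pred (sx S),
      alg_indep (sx S),
      (forall z, sex S z -> exists s : seq F,
          forall y, sx S y -> sB S y z != 0 -> y \in s) &
      (exists d : F -> nat, (forall y, sex S y -> (0 < d y)%N) /\
         forall y z, sex S y -> sex S z ->
           (d y)%:Z * sB S y z = - ((d z)%:Z * sB S z y))].

(* labelled state of a seed reached by mutations: cluster and matrix *)
Record state := State { cl : F -> F; mat : F -> F -> int }.

Definition init S : state := State id (sB S).

Definition col_supp S (st : state) (k : F) : seq F :=
  epsilon (inhabits [::])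
    (fun s : seq F => forall j, sx S j -> mat st j k != 0 -> j \in s).

Definition Pplus S st k : F :=
  \prod_(j <- undup (col_supp S st k) | sx S j && (0 < mat st j k))
     cl st j ^+ absz (mat st j k).
Definition Pminus S st k : F :=
  \prod_(j <- undup (col_supp S st k) | sx S j && (mat st j k < 0))
     cl st j ^+ absz (mat st j k).

Definition mutate S (st : state) (k : F) : state :=
  State (fun j => if j == k then (Pplus S st k + Pminus S st k) / cl st k
                  else cl st j)
        (fun i j => if (i == k) || (j == k) then - mat st i j
                    else mat st i j +
                      (if (0 < mat st i k) && (0 < mat st k j)
                       then mat st i k * mat st k j
                       else if (mat st i k < 0) && (mat st k j < 0)
                       then - (mat st i k * mat st k j) else 0)).

(* mutation along a label sequence [k_1; ...; k_l] (k_1 first) *)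
Fixpoint mutseq S (st : state) (ks : seq F) : state :=
  if ks is k :: ks' then mutseq S (mutate S st k) ks' else st.

Fixpoint varseq S (st : state) (ks : seq F) : seq F :=
  if ks is k :: ks' then cl st k :: varseq S (mutate S st k) ks' else [::].

Definition clvar S (z : F) : Prop :=
  exists ks : seq F, all (sex S) ks /\
    exists2 y, sx S y & z = cl (mutseq S (init S) ks) y.

Inductive rca S : F -> Prop :=
| rca_var z : clvar S z -> rca S z
| rca_one : rca S 1
| rca_add a b : rca S a -> rca S b -> rca S (a + b)
| rca_opp a : rca S a -> rca S (- a)
| rca_mul a b : rca S a -> rca S b -> rca S (a * b).

Definition is_int (z : F) : Prop := exists n : int, z = n%:~R.

End Seeds.

(* rooted cluster morphism A(S) -> A(S'), given by f on the ambient fields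
   (only its restriction to A(S) matters) *)
Definition is_rcm (F F' : fieldType) (S : seed F) (S' : seed F')
    (f : F -> F') : Prop :=
  [/\ (forall a, rca S a -> rca S' (f a)),
      f 1 = 1,
      (forall a b, rca S a -> rca S b -> f (a + b) = f a + f b) &
      (forall a b, rca S a -> rca S b -> f (a * b) = f a * f b)] /\
  [/\ (forall y, sex S y -> sex S' (f y) \/ is_int (f y)),
      (forall y, sfx S y -> sx S' (f y) \/ is_int (f y)) &
      (forall (ks : seq F) (ks' : seq F'),
         all (sex S) ks -> all (sex S') ks' ->
         map f (varseq S (init S) ks) = varseq S' (init S') ks' ->
         forall y, sx S y ->
           (is_int (f y) -> f (cl (mutseq S (init S) ks) y) = f y) /\
           (sx S' (f y) ->
              f (cl (mutseq S (init S) ks) y)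
              = cl (mutseq S' (init S') ks') (f y)))].

Definition image_seed (F F' : fieldType) (S : seed F) (S' : seed F')
    (f : F -> F') : seed F' :=
  let iex := fun y => sex S' y && asbool (exists2 z, sex S z & f z = y) in
  let ix  := fun y => sx S' y && asbool (exists2 z, sx S z & f z = y) in
  Seed iex (fun y => ix y && ~~ iex y) (sB S').

Definition is_ideal (F F' : fieldType) (S : seed F) (S' : seed F')
    (f : F -> F') : Prop :=
  forall z, rca (image_seed S S' f) z <-> exists2 a, rca S a & f a = z.

From HB Require Import structures.
From mathcomp Require Import all_boot all_order all_algebra.
From mathcomp Require Import zify ring.
From Stdlib Require Import ClassicalEpsilon FunctionalExtensionality PropExtensionality.
Set Implicit Arguments. Unset Strict Implicit. Unset Printing Implicit Defensive.
Import Order.TTheory GRing.Theory Num.Theory.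
Local Open Scope ring_scope.

(* Let z be exchangeable in S with k := f z exchangeable in S'.  Applying f
   to the exchange relation x_z x'_z = P_z and using (CM3) for the mutation at
   z gives f(P_z) = P'_k.  Since f sends every initial variable into x' or Z,
   every variable occurring in P'_k lies in f(x), i.e. b'_jk = 0 for j outside
   f(x).  This vanishing survives mutation in f(ex), so f(S) and S' mutate
   alike along every f(S)-admissible sequence.  This gives A(f(S)) <= A(S')
   and, for g := f, condition (CM3) in part (2), where g is onto A(f(S))
   precisely because f is ideal.  (CM3) for the inclusion also needs that a
   mutation sequence is determined by the variables it mutates.  This holds
   because clusters stay algebraically independent: multiplying a relation
   among the variables of mu_k(x) by a power of x_k gives a relation among x,
   whose part of each x_k-degree is a power of P_k times the part of the
   original relation of some x'_k-degree. *)

Lemma sum_partition (V : zmodType) (I : Type) (K : eqType)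
    (key : I -> K) (l : seq I) (h : I -> V) (r : seq K) :
  uniq r -> {subset map key l <= r} ->
  \sum_(i <- l) h i = \sum_(s <- r) \sum_(i <- l | key i == s) h i.
Proof.
move=> ur; rewrite (exchange_big_dep xpredT) //=.
elim: l => [|i l IH] lr; first by rewrite !big_nil.
rewrite !big_cons IH => [|s sl]; last by apply: lr; rewrite inE sl orbT.
congr (_ + _); rewrite -big_filter (@eq_filter _ _ (pred1 (key i))) => [|s].
  by rewrite filter_pred1_uniq ?big_seq1 // lr ?inE ?eqxx.
by rewrite /= eq_sym.
Qed.

Lemma all_allpairs (A B C : Type) (f : A -> B -> C) (P : pred A) (Q : pred B)
    (R : pred C) l1 l2 :
  all P l1 -> all Q l2 -> (forall a b, P a -> Q b -> R (f a b)) ->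
  all R [seq f a b | a <- l1, b <- l2].
Proof.
move=> Pl1 Ql2 PQR; elim: l1 Pl1 => //= a l1 IH /andP[Pa Pl1].
by rewrite all_cat IH // andbT all_map; apply: sub_all Ql2 => b; apply: PQR.
Qed.

Lemma all_leq_bigmax (I : Type) (r : seq I) (g : I -> nat) :
  all (fun i => g i <= \max_(j <- r) g j)%N r.
Proof.
elim: r => //= i r IH; rewrite big_cons leq_maxl /=.
by apply: sub_all IH => j /leq_trans; apply; rewrite leq_maxr.
Qed.

Section SumsOverAll.
Variables (V : zmodType) (I : Type) (P : pred I) (r : seq I).
Hypothesis Pr : all P r.

Lemma eq_bigr_all (Q : pred I) (h1 h2 : I -> V) :
  (forall t, P t -> h1 t = h2 t) ->
  \sum_(t <- r | Q t) h1 t = \sum_(t <- r | Q t) h2 t.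
Proof.
move=> h12; rewrite -(all_filterP Pr) !big_filter_cond.
by apply: eq_bigr => t /andP[Pt _]; apply: h12.
Qed.

Lemma eq_bigl_all (Q1 Q2 : pred I) (h : I -> V) :
  (forall t, P t -> Q1 t = Q2 t) ->
  \sum_(t <- r | Q1 t) h t = \sum_(t <- r | Q2 t) h t.
Proof.
move=> Q12; rewrite -(all_filterP Pr) !big_filter_cond.
by apply: eq_bigl => t; case Pt: (P t); rewrite //= Q12.
Qed.

End SumsOverAll.

(** * Integer combinations of monomials *)

Section IntegerCombinations.
Variable F : fieldType.
Implicit Types (v : F -> F) (ls L : seq F) (m : F -> nat) (s : seq nat).

Definition fupd (A : Type) (g : F -> A) (k : F) (a : A) : F -> A :=
  fun x => if x == k then a else g x.

(* A term is an integer coefficient with an exponent function; exponent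
   functions are only ever read on the finite label list at hand. *)
Definition term := (int * (F -> nat))%type.

Definition monomial v ls m : F := \prod_(x <- ls) v x ^+ m x.
Definition eval_terms v ls (l : seq term) : F :=
  \sum_(t <- l) t.1%:~R * monomial v ls t.2.
Definition exponents ls m : seq nat := map m ls.
Definition exponent_fun ls s : F -> nat := fun x => nth 0%N s (index x ls).
Definition coef_terms ls (l : seq term) s : int :=
  \sum_(t <- l | exponents ls t.2 == s) t.1.

Definition indep_on v (D : pred F) : Prop :=
  forall ls l, uniq ls -> all D ls -> eval_terms v ls l = 0 ->
    forall s, coef_terms ls l s = 0.

Lemma exponentsP ls m1 m2 :
  reflect {in ls, m1 =1 m2} (exponents ls m1 == exponents ls m2).
Proof. exact: (iffP eqP) (eq_in_map _ _ _).2 (eq_in_map _ _ _).1. Qed.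

Lemma exponents_neq ls m1 m2 x :
  x \in ls -> m1 x != m2 x -> (exponents ls m1 == exponents ls m2) = false.
Proof. by move=> xls; apply: contraNF => /exponentsP ->. Qed.

Lemma size_exponents ls m : size (exponents ls m) = size ls.
Proof. exact: size_map. Qed.

Lemma exponent_funK ls s :
  uniq ls -> size s = size ls -> exponents ls (exponent_fun ls s) = s.
Proof.
move=> uls sz; apply: (@eq_from_nth _ 0%N); first by rewrite size_exponents.
by move=> i; rewrite size_exponents => lti; rewrite (nth_map 0) // /exponent_fun index_uniq // -sz.
Qed.

Lemma monomial_exponents v ls m :
  monomial v ls m = monomial v ls (exponent_fun ls (exponents ls m)).
Proof.
apply: eq_big_seq => x xls.
by rewrite /exponent_fun (nth_map x) ?index_mem // nth_index.
Qed.

Lemma coef_terms_notin ls l s :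
  s \notin [seq exponents ls t.2 | t <- l] -> coef_terms ls l s = 0.
Proof.
rewrite /coef_terms; elim: l => [|t l IH]; first by rewrite big_nil.
rewrite /= inE negb_or big_cons => /andP[ne /IH ->].
by rewrite eq_sym (negbTE ne).
Qed.

Lemma coef_terms_size ls l s : size s != size ls -> coef_terms ls l s = 0.
Proof.
by move=> sz; apply: big1 => t /eqP st; rewrite -st size_exponents eqxx in sz.
Qed.

Lemma coef_terms_eq0 ls l : uniq ls ->
  (forall m, coef_terms ls l (exponents ls m) = 0) -> forall s, coef_terms ls l s = 0.
Proof.
move=> uls H s; have [sz|] := eqVneq (size s) (size ls).
  by rewrite -(exponent_funK uls sz).
exact: coef_terms_size.
Qed.

Lemma eval_terms_group v ls l : eval_terms v ls l =
  \sum_(s <- undup [seq exponents ls t.2 | t <- l])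
     (coef_terms ls l s)%:~R * monomial v ls (exponent_fun ls s).
Proof.
rewrite /eval_terms (@sum_partition _ _ _ (fun t : term => exponents ls t.2) l
  _ _ (undup_uniq [seq exponents ls t.2 | t <- l])) => [|s]; last by rewrite mem_undup.
apply: eq_bigr => s _; rewrite /coef_terms rmorph_sum big_distrl /=.
by apply: eq_bigr => t /eqP <-; rewrite -monomial_exponents.
Qed.

Lemma eval_terms_eq0 v ls l :
  (forall s, coef_terms ls l s = 0) -> eval_terms v ls l = 0.
Proof. by move=> H; rewrite eval_terms_group big1 // => s _; rewrite H mul0r. Qed.

Lemma monomial_exponent_fun ls s :
  uniq ls -> monomial id ls (exponent_fun ls s) = mono_eval ls s.
Proof.
move=> uls; rewrite /monomial /mono_eval (big_nth 0) big_mkord.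
by apply: eq_bigr => i _; rewrite /exponent_fun index_uniq.
Qed.

Lemma alg_indep_indep_on (D : pred F) : alg_indep D -> indep_on id D.
Proof.
move=> AI ls l uls Dls ev s; apply/eqP; apply: contraT => nz.
set keys := [seq s' <- undup [seq exponents ls t.2 | t <- l] | coef_terms ls l s' != 0].
have s_keys : s \in keys.
  rewrite mem_filter nz mem_undup; apply: contraT => sl.
  by rewrite coef_terms_notin ?eqxx in nz.
have := AI ls [seq (coef_terms ls l s', s') | s' <- keys] uls Dls.
rewrite -map_comp map_id filter_uniq ?undup_uniq // !all_map.
have -> : all (fun s' => size s' == size ls) keys.
  rewrite all_filter all_undup all_map; apply: sub_all (all_predT _) => t _ /=.
  by rewrite size_exponents eqxx implybT.
have -> : all (fun s' => coef_terms ls l s' != 0) keys by apply: filter_all.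
have -> : [seq (coef_terms ls l s', s') | s' <- keys] != [::].
  by rewrite -size_eq0 size_map size_eq0; apply: contraTneq s_keys => ->.
move=> /(_ isT isT isT isT); set sum := \sum_(t <- _) _.
suff -> : sum = 0 by rewrite eqxx.
rewrite /sum big_map big_filter -[RHS]ev (eval_terms_group id) big_mkcond /=.
apply: eq_bigr => s' _; rewrite monomial_exponent_fun //.
by case: (eqVneq (coef_terms ls l s') 0) => [->|]; rewrite ?mul0r.
Qed.

Lemma monomialD v ls m1 m2 :
  monomial v ls (fun x => m1 x + m2 x)%N = monomial v ls m1 * monomial v ls m2.
Proof. by rewrite /monomial -big_split; apply: eq_bigr => x _; rewrite exprD. Qed.

Lemma monomial0 v ls : monomial v ls (fun _ => 0%N) = 1.
Proof. by rewrite /monomial big1 // => x _; rewrite expr0. Qed.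

Lemma monomial_widen v ls L m : uniq ls -> uniq L -> {subset ls <= L} ->
  {in [predD L & ls], m =1 fun _ => 0%N} -> monomial v L m = monomial v ls m.
Proof.
move=> uls uL lsL m0; rewrite /monomial (bigID (mem ls)) /=.
rewrite [X in _ * X]big1_seq ?mulr1 => [|x /andP[xls xL]]; last first.
  by rewrite m0 ?expr0 // inE xls.
rewrite -big_filter; apply/perm_big/uniq_perm; rewrite ?filter_uniq // => x.
by rewrite mem_filter; case xls: (x \in ls); rewrite //= lsL.
Qed.

Lemma monomial_split v ls m k : uniq ls -> k \in ls ->
  monomial v ls m = v k ^+ m k * monomial v ls (fupd m k 0%N).
Proof.
move=> uls kls; rewrite /monomial !(bigD1_seq k) //= /fupd eqxx expr0 mul1r.
by congr (_ * _); apply: eq_bigr => x /negbTE ->.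
Qed.

Lemma monomial_fupd v ls m k a : uniq ls -> k \in ls ->
  monomial (fupd v k a) ls m = a ^+ m k * monomial v ls (fupd m k 0%N).
Proof.
move=> uls kls; rewrite (monomial_split _ _ uls kls) /fupd eqxx; congr (_ * _).
by apply: eq_bigr => x _; case: eqP; rewrite ?expr0.
Qed.

Definition mul_terms (l1 l2 : seq term) : seq term :=
  [seq (a.1 * b.1, fun x => (a.2 x + b.2 x)%N) | a <- l1, b <- l2].
Definition exp_terms (l : seq term) n : seq term :=
  iter n (mul_terms l) [:: (1, fun _ => 0%N)].

Lemma eval_mul_terms v ls l1 l2 :
  eval_terms v ls (mul_terms l1 l2) = eval_terms v ls l1 * eval_terms v ls l2.
Proof.
rewrite /eval_terms big_allpairs_dep big_distrl /=; apply: eq_bigr => a _.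
by rewrite big_distrr; apply: eq_bigr => b _; rewrite intrM monomialD mulrACA.
Qed.

Lemma eval_exp_terms v ls l n : eval_terms v ls (exp_terms l n) = eval_terms v ls l ^+ n.
Proof.
elim: n => [|n IH]; first by rewrite /eval_terms big_seq1 monomial0 mulr1.
by rewrite /exp_terms iterS eval_mul_terms IH exprS.
Qed.

Lemma eval_terms1 v ls c m : eval_terms v ls [:: (c, m)] = c%:~R * monomial v ls m.
Proof. exact: big_seq1. Qed.

Lemma exp_terms_free k l n : all (fun t => t.2 k == 0%N) l ->
  all (fun t => t.2 k == 0%N) (exp_terms l n).
Proof.
move=> lk; elim: n => //= n IH.
by apply: all_allpairs lk IH _ => a b /eqP ak /eqP bk /=; rewrite ak bk.
Qed.

Lemma coef_terms_slice ls l k e m : k \in ls ->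
  coef_terms ls [seq u <- l | u.2 k == e] (exponents ls m) =
  if m k == e then coef_terms ls l (exponents ls m) else 0.
Proof.
move=> kls; rewrite /coef_terms big_filter_cond; case: eqP => [mk|mk].
  apply: eq_bigl => u; case: (exponentsP ls u.2 m) => [um|]; last by rewrite andbF.
  by rewrite um // mk eqxx.
by apply: big1 => u /andP[/eqP ue /exponentsP /(_ k kls) umk]; case: mk; rewrite -umk.
Qed.

Lemma indep_on_neq0 v D k : indep_on v D -> D k -> v k != 0.
Proof.
move=> vD Dk; apply/eqP => vk0.
have := vD [:: k] [:: (1, fun x => nat_of_bool (x == k))] isT.
rewrite /= Dk eval_terms1 /monomial big_cons big_nil eqxx expr1 vk0 !mul0r mulr0.
by move=> /(_ isT erefl [:: 1%N]); rewrite /coef_terms big_cons big_nil /= eqxx.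
Qed.

Lemma indep_on_not_int v D y : indep_on v D -> D y -> ~ is_int (v y).
Proof.
move=> vD Dy [n vyn].
have := vD [:: y] [:: (1, fun x => nat_of_bool (x == y)); (- n, fun _ => 0%N)] isT.
rewrite /= Dy /eval_terms /monomial !big_cons !big_nil /= eqxx expr0 expr1.
rewrite !mulr1 mul1r addr0 intrN vyn subrr => /(_ isT erefl [:: 1%N]).
by rewrite /coef_terms !big_cons big_nil /= eqxx.
Qed.

Lemma indep_on_inj v D : indep_on v D -> {in D &, injective v}.
Proof.
move=> vD a b; rewrite !unfold_in => Da Db vab; apply/eqP; apply: contraT => ab.
have := vD [:: a; b] [:: (1, fun x => nat_of_bool (x == a));
                         (-1, fun x => nat_of_bool (x == b))].
rewrite /= inE (negbTE ab) Da Db /eval_terms /monomial !big_cons !big_nil /=.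
rewrite !eqxx (eq_sym b a) (negbTE ab) vab rmorph1 rmorphN1 mulN1r !expr0 !expr1.
rewrite !mulr1 !mul1r addr0 subrr => /(_ isT isT erefl [:: 1%N; 0%N]).
by rewrite /coef_terms !big_cons big_nil /= eqxx (eq_sym b a) (negbTE ab).
Qed.

End IntegerCombinations.

(** * Exchange preserves algebraic independence *)

Section ExchangeIndependence.
Variable F : fieldType.
Variables (v : F -> F) (D : pred F) (k : F) (P : seq (term F)) (Lp : seq F) (Pv : F).
Hypotheses (vD : indep_on v D) (Dk : D k) (DLp : all D Lp).
Hypotheses (Pk : all (fun t => t.2 k == 0%N) P) (Pv0 : Pv != 0).
Hypothesis evP : forall L, uniq L -> {subset Lp <= L} -> eval_terms v L P = Pv.

Let vk0 : v k != 0 := indep_on_neq0 vD Dk.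
Let v' := fupd v k (Pv / v k).

(* Multiplying a relation [l] among the new variables by [v k ^+ N] and
   substituting P / v k for the new k-th variable gives the relation
   [flatten (map cleared l)] among the old ones; its part of x_k-degree N - j
   is P^j times [slice j].  Exponents are cut down to [ls] so that monomials
   may be taken over the larger list [L], which also carries P. *)
Section ClearDenominators.
Variables (ls : seq F) (l : seq (term F)) (N : nat).
Hypotheses (uls : uniq ls) (kls : k \in ls) (lN : all (fun t => t.2 k <= N)%N l).

Let L := undup (ls ++ Lp).
Let uL : uniq L := undup_uniq _.
Let lsL : {subset ls <= L}.
Proof. by move=> x xls; rewrite mem_undup mem_cat xls. Qed.
Let LpL : {subset Lp <= L}.
Proof. by move=> x xLp; rewrite mem_undup mem_cat xLp orbT. Qed.

Definition clear_exp (t : term F) : F -> nat :=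
  fupd (fun x => if x \in ls then t.2 x else 0%N) k (N - t.2 k)%N.
Definition cleared (t : term F) : seq (term F) :=
  mul_terms (exp_terms P (t.2 k)) [:: (t.1, clear_exp t)].
Definition slice j : seq (term F) :=
  [seq (t.1, fupd t.2 k 0%N) | t <- l & t.2 k == j].

Lemma cleared_exp t : all (fun u => u.2 k == N - t.2 k)%N (cleared t).
Proof.
have tk : all (fun b : term F => b.2 k == N - t.2 k)%N [:: (t.1, clear_exp t)].
  by rewrite /= /clear_exp /fupd !eqxx.
apply: all_allpairs (exp_terms_free _ Pk) tk _ => a b /eqP ak /eqP bk /=.
by rewrite ak bk.
Qed.

Lemma eval_cleared t : (t.2 k <= N)%N ->
  eval_terms v L (cleared t) = v k ^+ N * (t.1%:~R * monomial v' ls t.2).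
Proof.
move=> tN; rewrite eval_mul_terms eval_exp_terms evP // eval_terms1.
rewrite (monomial_widen _ uls uL lsL) => [|x /andP[xls xL]]; last first.
  by rewrite /clear_exp /fupd (negbTE xls); case: eqP => // xk; rewrite xk kls in xls.
rewrite (monomial_split _ _ uls kls) monomial_fupd // {1}/clear_exp /fupd eqxx.
have -> : monomial v ls (fupd (clear_exp t) k 0%N) = monomial v ls (fupd t.2 k 0%N).
  by apply: eq_big_seq => x xls; rewrite /clear_exp /fupd xls; case: eqP.
rewrite -{2}(subnK tN) exprD expr_div_n; field.
by rewrite expf_neq0.
Qed.

Lemma eval_clear :
  eval_terms v L (flatten (map cleared l)) = v k ^+ N * eval_terms v' ls l.
Proof.
rewrite /eval_terms big_flatten big_map big_distrr /=.
by apply: (eq_bigr_all lN xpredT) => t tN; apply: eval_cleared.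
Qed.

Lemma eval_slice j : (j <= N)%N ->
  eval_terms v L [seq u <- flatten (map cleared l) | u.2 k == N - j]%N =
  v k ^+ N * (Pv / v k) ^+ j * eval_terms v ls (slice j).
Proof.
move=> jN; rewrite /eval_terms big_filter big_flatten big_map.
rewrite /slice big_map big_filter big_distrr [RHS]big_mkcond /=.
apply: (eq_bigr_all lN xpredT) => t tN.
rewrite (eq_bigl_all (cleared_exp t) (Q2 := fun=> t.2 k == j)) => [|u /eqP ->]; last first.
  by apply/eqP/eqP; lia.
case: eqP => [tj|_]; last by rewrite big_pred0.
rewrite -[LHS]/(eval_terms v L (cleared t)) (eval_cleared tN) monomial_fupd // tj.
by rewrite !mulrA; congr (_ * _); exact: mulrAC.
Qed.

Lemma coef_slice m : coef_terms ls (slice (m k)) (exponents ls (fupd m k 0%N)) =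
  coef_terms ls l (exponents ls m).
Proof.
rewrite /coef_terms /slice big_map big_filter_cond; apply: eq_bigl => t /=.
apply/andP/exponentsP => [[/eqP tk /exponentsP E] x xls | E].
  by have := E x xls; rewrite /fupd; case: eqP => [->|].
by split; [rewrite E | apply/exponentsP => x xls; rewrite /fupd E].
Qed.

End ClearDenominators.

Lemma indep_on_exchange : indep_on v' D.
Proof.
move=> ls l uls Dls ev0.
have [kls|kls] := boolP (k \in ls); last first.
  apply: vD uls Dls _; rewrite -ev0; apply: eq_bigr => t _; congr (_ * _).
  by apply: eq_big_seq => x xls; rewrite /v' /fupd; case: eqP => // xk; rewrite -xk xls in kls.
have lN := all_leq_bigmax l (fun t => t.2 k).
set N := \max_(t <- l) t.2 k in lN.
apply: coef_terms_eq0 => // m; have [Nm|mN] := ltnP N (m k).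
  rewrite /coef_terms (eq_bigl_all lN (Q2 := xpred0)) ?big_pred0 // => t tN.
  by apply: exponents_neq kls _; rewrite ltn_eqF // (leq_ltn_trans tN Nm).
set L := undup (ls ++ Lp).
have DL : all D L by rewrite all_undup all_cat Dls.
have kL : k \in L by rewrite mem_undup mem_cat kls.
have R0 : forall s, coef_terms L (flatten (map (cleared ls N) l)) s = 0.
  by apply: vD (undup_uniq _) DL _; rewrite eval_clear // ev0 mulr0.
have slice0 : eval_terms v L
    [seq u <- flatten (map (cleared ls N) l) | u.2 k == N - m k]%N = 0.
  apply/eval_terms_eq0/coef_terms_eq0 => [|m']; first exact: undup_uniq.
  by rewrite coef_terms_slice // R0; case: ifP.
rewrite -coef_slice //; apply: (vD uls Dls); move/eqP: slice0.
rewrite eval_slice // mulf_eq0 => /orP[|/eqP //].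
by rewrite mulf_eq0 !expf_eq0 mulf_eq0 invr_eq0 (negbTE vk0) (negbTE Pv0) !andbF.
Qed.

End ExchangeIndependence.

(** * Mutation of seeds *)

Lemma skew_sign (a b : int) (da db : nat) : (0 < da)%N -> (0 < db)%N ->
  da%:Z * a = - (db%:Z * b) -> (0 < a) = (b < 0).
Proof.
move=> da0 db0 dab; rewrite -(pmulr_rgt0 _ (_ : 0 < da%:Z)) ?ltz_nat //.
by rewrite dab oppr_gt0 pmulr_rlt0 ?ltz_nat.
Qed.

Section Mutation.
Variables (F : fieldType) (S : seed F) (d : F -> nat).
Hypothesis d_gt0 : forall y, sex S y -> (0 < d y)%N.

Definition skew (st : state F) := forall y z, sex S y -> sex S z ->
  (d y)%:Z * mat st y z = - ((d z)%:Z * mat st z y).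

Lemma skew_diag st k : skew st -> sex S k -> mat st k k = 0.
Proof.
move=> sk Sk; have dk : (d k)%:Z != 0 by rewrite eqz_nat -lt0n d_gt0.
have /eqP := sk k k Sk Sk.
by rewrite -subr_eq0 opprK -mulr2n mulrn_eq0 /= mulf_eq0 (negbTE dk) => /eqP.
Qed.

Lemma skew_mutate st k : skew st -> sex S k -> skew (mutate S st k).
Proof.
move=> sk Sk y z Sy Sz /=.
case: (boolP ((y == k) || (z == k))) => yz.
  by rewrite (orbC (z == k)) yz !mulrN (sk y z Sy Sz) !opprK.
rewrite (orbC (z == k)) (negbTE yz) !mulrDr (sk y z Sy Sz) opprD; congr (_ + _).
have dy := d_gt0 Sy; have dz := d_gt0 Sz; have dk := d_gt0 Sk.
have syk := skew_sign dy dk (sk y k Sy Sk).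
have skz := skew_sign dk dz (sk k z Sk Sz).
have sky := skew_sign dk dy (sk k y Sk Sy).
have szk := skew_sign dz dk (sk z k Sz Sk).
have yz_zy : (d y)%:Z * (mat st y k * mat st k z) =
             (d z)%:Z * (mat st z k * mat st k y).
  apply: (@mulfI _ (d k)%:Z); first by rewrite eqz_nat -lt0n.
  have -> : (d k)%:Z * ((d y)%:Z * (mat st y k * mat st k z)) =
            ((d y)%:Z * mat st y k) * ((d k)%:Z * mat st k z) by ring.
  rewrite (sk y k Sy Sk) (sk k z Sk Sz); ring.
rewrite syk skz -sky -szk.
case C1: ((mat st k y < 0) && (mat st z k < 0)).
  move/andP: C1 => [a b]; rewrite (lt_gtF b) a b /= yz_zy mulrN opprK.
  by rewrite mulrC [mat st z k * _]mulrC.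
case C2: ((0 < mat st k y) && (0 < mat st z k)).
  move/andP: C2 => [a b]; rewrite a b /= mulrN yz_zy.
  by rewrite [mat st z k * _]mulrC.
by rewrite mulr0 andbC C2 andbC C1 mulr0 oppr0.
Qed.

Definition exch_labels (st : state F) k : seq F :=
  [seq x <- undup (col_supp S st k) | sx S x].
Definition exch_exp (p : pred int) (st : state F) k : F -> nat :=
  fun x => if (x \in exch_labels st k) && p (mat st x k) then absz (mat st x k) else 0%N.
Definition exch_terms (st : state F) k : seq (term F) :=
  [:: (1, exch_exp (fun b => 0 < b) st k); (1, exch_exp (fun b => b < 0) st k)].

Lemma all_exch_labels st k : all (sx S) (exch_labels st k).
Proof. exact: filter_all. Qed.

Lemma mem_exch_labels st k j :
  (exists s : seq F, forall i, sx S i -> mat st i k != 0 -> i \in s) ->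
  sx S j -> mat st j k != 0 -> j \in exch_labels st k.
Proof.
move=> fin Sj jk; rewrite mem_filter Sj mem_undup.
exact: (epsilon_spec (inhabits [::]) _ fin) j Sj jk.
Qed.

Lemma monomial_exch_exp (p : pred int) st k L :
  uniq L -> {subset exch_labels st k <= L} ->
  monomial (cl st) L (exch_exp p st k) =
  \prod_(j <- undup (col_supp S st k) | sx S j && p (mat st j k))
     cl st j ^+ absz (mat st j k).
Proof.
move=> uL labL; have ulab : uniq (exch_labels st k) by rewrite filter_uniq ?undup_uniq.
rewrite (monomial_widen _ ulab uL labL) => [|x /andP[xlab _]]; last first.
  by rewrite /exch_exp (negbTE xlab).
rewrite -big_filter_cond -/(exch_labels st k) [RHS]big_mkcond.
by apply: eq_big_seq => x xlab; rewrite /exch_exp xlab /=; case: ifP; rewrite ?expr0.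
Qed.

Lemma eval_exch_terms st k L : uniq L -> {subset exch_labels st k <= L} ->
  eval_terms (cl st) L (exch_terms st k) = Pplus S st k + Pminus S st k.
Proof.
move=> uL labL; rewrite /eval_terms !big_cons big_nil /= !mul1r addr0.
by rewrite !monomial_exch_exp.
Qed.

Lemma exch_terms_free st k : mat st k k = 0 ->
  all (fun t => t.2 k == 0%N) (exch_terms st k).
Proof. by move=> kk; rewrite /= /exch_exp kk ltxx !andbF. Qed.

Lemma exch_poly_neq0 st k : indep_on (cl st) (sx S) ->
  Pplus S st k + Pminus S st k != 0.
Proof.
move=> ind; apply/eqP => P0; have ulab : uniq (exch_labels st k).
  by rewrite filter_uniq ?undup_uniq.
(* the monomial of [Pplus] has coefficient 1 or 2 in [exch_terms] *)
have := ind _ (exch_terms st k) ulab (all_exch_labels st k).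
rewrite eval_exch_terms // P0 => /(_ erefl (exponents (exch_labels st k)
                                             (exch_exp (fun b => 0 < b) st k))).
by rewrite /coef_terms !big_cons big_nil /= eqxx; case: ifP.
Qed.

Lemma exch_poly_involves st k j L c1 c2 m1 m2 :
  indep_on (cl st) (sx S) -> uniq L -> all (sx S) L ->
  {subset exch_labels st k <= L} -> j \in exch_labels st k ->
  mat st j k != 0 -> m1 j = 0%N -> m2 j = 0%N ->
  Pplus S st k + Pminus S st k !=
    c1%:~R * monomial (cl st) L m1 + c2%:~R * monomial (cl st) L m2.
Proof.
move=> ind uL SL labL jlab jk m1j m2j; apply/eqP => E.
set pos := exch_exp (fun b => 0 < b) st k; set neg := exch_exp (fun b => b < 0) st k.
have := ind L [:: (c1, m1); (c2, m2); (-1, pos); (-1, neg)] uL SL.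
have jL := labL _ jlab.
have -> : eval_terms (cl st) L [:: (c1, m1); (c2, m2); (-1, pos); (-1, neg)] = 0.
  rewrite /eval_terms !big_cons big_nil /= addr0 !rmorphN1 !mulN1r addrA -E.
  by rewrite !monomial_exch_exp // -opprD subrr.
have neq m m' : m j = 0%N -> m' j = absz (mat st j k) ->
    (exponents L m == exponents L m') = false.
  by move=> mj m'j; apply: exponents_neq jL _; rewrite mj m'j eq_sym absz_eq0.
have [b_lt0|b_ge0] := ltP (mat st j k) 0.
- have negj : neg j = absz (mat st j k) by rewrite /neg /exch_exp jlab b_lt0.
  have posj : pos j = 0%N by rewrite /pos /exch_exp jlab ltNge (ltW b_lt0).
  move=> /(_ erefl (exponents L neg)).
  by rewrite /coef_terms !big_cons big_nil /= (neq m1) ?(neq m2) ?(neq pos) // eqxx.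
- have b_gt0 : 0 < mat st j k by rewrite lt_neqAle b_ge0 eq_sym jk.
  have posj : pos j = absz (mat st j k) by rewrite /pos /exch_exp jlab b_gt0.
  have negj : neg j = 0%N by rewrite /neg /exch_exp jlab ltNge (ltW b_gt0).
  move=> /(_ erefl (exponents L pos)).
  by rewrite /coef_terms !big_cons big_nil /= (neq m1) ?(neq m2) ?(neq neg) // eqxx.
Qed.

Definition valid_state (st : state F) := indep_on (cl st) (sx S) /\ skew st.

Lemma valid_mutate st k : valid_state st -> sex S k -> valid_state (mutate S st k).
Proof.
move=> [ind sk] Sk; split; last exact: skew_mutate.
have Sk' : sx S k by rewrite /sx Sk.
exact: (indep_on_exchange ind Sk' (all_exch_labels st k)
          (exch_terms_free (skew_diag sk Sk)) (@exch_poly_neq0 st k ind)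
          (fun L => @eval_exch_terms st k L)).
Qed.

Lemma varseq_inj st ks ks' : valid_state st -> all (sex S) ks -> all (sex S) ks' ->
  varseq S st ks = varseq S st ks' -> ks = ks'.
Proof.
elim: ks st ks' => [|k ks IH] st [|k' ks'] //= vst /andP[Sk Sks] /andP[Sk' Sks'] [kk'].
have {kk'}<- : k = k'.
  by apply: (indep_on_inj vst.1) kk'; rewrite unfold_in /sx ?Sk ?Sk'.
by move=> /IH -> //; apply: valid_mutate.
Qed.

End Mutation.

(** * The image seed *)

Lemma asboolP (P : Prop) : reflect P (asbool P).
Proof. by rewrite /asbool; case: excluded_middle_informative => H; constructor. Qed.

Section ImageSeed.
Variables (F F' : fieldType) (S : seed F) (S' : seed F') (f : F -> F').
Local Notation T := (image_seed S S' f).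

Lemma sx_image y : sx T y = sx S' y && asbool (exists2 z, sx S z & f z = y).
Proof.
rewrite /sx /=; case E: (sex S' y && asbool (exists2 z, sex S z & f z = y)).
  move/andP: E => [-> /asboolP[z Sz fz]] /=.
  by apply/esym/asboolP; exists z; rewrite // /sx Sz.
by rewrite andbT.
Qed.

Lemma sex_image_sex y : sex T y -> sex S' y.
Proof. by case/andP. Qed.

Lemma sx_image_sx y : sx T y -> sx S' y.
Proof. by rewrite sx_image => /andP[]. Qed.

Definition image_supported (st : state F') :=
  forall k j, sex T k -> sx S' j -> ~~ sx T j -> mat st j k = 0.

Section Supported.
Variables (st : state F') (k : F').
Hypotheses (st_supp : image_supported st) (Tk : sex T k).

Lemma col_supp_image : col_supp T st k = col_supp S' st k.
Proof.
rewrite /col_supp; congr (epsilon _ _).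
apply: functional_extensionality => s; apply: propositional_extensionality.
split=> s_supp j Sj jk; last exact: s_supp (sx_image_sx Sj) jk.
case Tj: (sx T j); first exact: s_supp.
by rewrite (st_supp Tk Sj (negbT Tj)) eqxx in jk.
Qed.

Lemma exch_rows_image (p : pred int) : ~~ p 0 ->
  forall j, sx T j && p (mat st j k) = sx S' j && p (mat st j k).
Proof.
move=> p0 j; case Tj: (sx T j); first by rewrite (sx_image_sx Tj).
case S'j: (sx S' j) => //=.
by rewrite (st_supp Tk S'j (negbT Tj)) (negbTE p0).
Qed.

Lemma mutate_image : mutate T st k = mutate S' st k.
Proof.
rewrite /mutate.
have -> : Pplus T st k = Pplus S' st k.
  rewrite /Pplus col_supp_image; apply: eq_bigl => j.
  by apply: (exch_rows_image (p := fun b => 0 < b)); rewrite ltxx.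
have -> : Pminus T st k = Pminus S' st k.
  rewrite /Pminus col_supp_image; apply: eq_bigl => j.
  by apply: (exch_rows_image (p := fun b => b < 0)); rewrite ltxx.
by [].
Qed.

Lemma image_supported_mutate : image_supported (mutate S' st k).
Proof.
move=> k' j Tk' S'j Tj /=; have jk : (j == k) = false.
  by apply: contraNF Tj => /eqP ->; rewrite /sx Tk.
rewrite jk /= (st_supp Tk' S'j Tj); case: eqP => [_|_]; first by rewrite oppr0.
by rewrite (st_supp Tk S'j Tj) ltxx /= add0r.
Qed.

End Supported.

Lemma mutseq_image st ks : image_supported st -> all (sex T) ks ->
  mutseq T st ks = mutseq S' st ks /\ varseq T st ks = varseq S' st ks.
Proof.
elim: ks st => [|k ks IH] st st_supp //= /andP[Tk Tks].
rewrite mutate_image //.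
by have [-> ->] := IH _ (image_supported_mutate st_supp Tk) Tks.
Qed.

End ImageSeed.

Lemma rca_init (F : fieldType) (S : seed F) y : sx S y -> rca S y.
Proof. by move=> Sy; apply: rca_var; exists [::]; split => //; exists y. Qed.

Section RingMorphism.
Variables (F F' : fieldType) (S : seed F) (f : F -> F').
Hypothesis f1 : f 1 = 1.
Hypothesis fM : forall a b, rca S a -> rca S b -> f (a * b) = f a * f b.

Lemma rca_exp_morph x n : rca S x -> rca S (x ^+ n) /\ f (x ^+ n) = f x ^+ n.
Proof.
move=> Sx; elim: n => [|n [IH1 IH2]]; first by rewrite !expr0 f1; split=> //; apply: rca_one.
by rewrite !exprS; split; [apply: rca_mul | rewrite fM // IH2].
Qed.

Lemma rca_prod_morph (r : seq F) (P : pred F) (w : F -> F) (n : F -> nat) :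
  (forall i, P i -> rca S (w i)) ->
  rca S (\prod_(i <- r | P i) w i ^+ n i) /\
  f (\prod_(i <- r | P i) w i ^+ n i) = \prod_(i <- r | P i) f (w i) ^+ n i.
Proof.
move=> Sw; elim: r => [|a r [IH1 IH2]]; first by rewrite !big_nil f1; split=> //; apply: rca_one.
rewrite !big_cons; case Pa: (P a) => //.
have [Sa fa] := rca_exp_morph (n a) (Sw a Pa).
by split; [apply: rca_mul | rewrite fM // fa IH2].
Qed.

End RingMorphism.

Lemma monomial_delta (F : fieldType) (L : seq F) y n : uniq L -> y \in L ->
  monomial id L (fupd (fun _ => 0%N) y n) = y ^+ n.
Proof.
move=> uL yL; rewrite /monomial (bigD1_seq y) //= /fupd eqxx big1 ?mulr1 //.
by move=> x /negbTE ->; rewrite expr0.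
Qed.

Lemma prod_monomial_rep (F : fieldType) (I : eqType) (r : seq I) (P : pred I)
    (w : I -> F) (n : I -> nat) (L : seq F) (X : F) : uniq L ->
  (forall i, i \in r -> P i -> (w i \in L) \/ is_int (w i)) ->
  (forall i, i \in r -> P i -> w i != X) ->
  exists c : int, exists2 m : F -> nat,
    \prod_(i <- r | P i) w i ^+ n i = c%:~R * monomial id L m & m X = 0%N.
Proof.
move=> uL; elim: r => [|a r IH] wL wX.
  by exists 1, (fun _ => 0%N); rewrite // big_nil monomial0 mulr1.
have [c [m E mX]] : exists c : int, exists2 m : F -> nat,
    \prod_(i <- r | P i) w i ^+ n i = c%:~R * monomial id L m & m X = 0%N.
  by apply: IH => i ir; [apply: wL | apply: wX]; rewrite inE ir orbT.
have ar : a \in a :: r := mem_head a r.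
rewrite big_cons; case Pa: (P a); last by exists c, m.
case: (wL a ar Pa) => [aL | [z az]]; last first.
  by exists (z ^+ n a * c), m; rewrite // E az intrM rmorphXn mulrA.
exists c, (fun x => m x + fupd (fun _ => 0%N) (w a) (n a) x)%N.
  by rewrite monomialD monomial_delta // E mulrCA [monomial _ _ _ * _]mulrC.
by rewrite mX /fupd eq_sym (negbTE (wX a ar Pa)).
Qed.

(** * Rooted cluster morphisms *)

Section RootedClusterMorphism.
Variables (F F' : fieldType) (S : seed F) (S' : seed F') (f : F -> F').
Hypotheses (seedS : is_seed S) (seedS' : is_seed S') (rcm_f : is_rcm S S' f).
Local Notation T := (image_seed S S' f).

Let indS : indep_on id (sx S).
Proof. by case: seedS => _ _ /alg_indep_indep_on. Qed.
Let indS' : indep_on id (sx S').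
Proof. by case: seedS' => _ _ /alg_indep_indep_on. Qed.

(* Apply f to x_z x'_z = P_z; (CM3) for the mutation at z gives f(x'_z) = x'_k. *)
Lemma rcm_exch_poly z k : sex S z -> f z = k -> sex S' k ->
  f (Pplus S (init S) z + Pminus S (init S) z) =
  Pplus S' (init S') k + Pminus S' (init S') k.
Proof.
move=> Sz fz S'k; have [[_ _ _ fM] [_ _ CM3]] := rcm_f.
have Sxz : sx S z by rewrite /sx Sz.
have S'xk : sx S' k by rewrite /sx S'k.
have z0 := indep_on_neq0 indS Sxz; have k0 := indep_on_neq0 indS' S'xk.
have zs : all (sex S) [:: z] by rewrite /= Sz.
have ks : all (sex S') [:: k] by rewrite /= S'k.
have fzk : map f (varseq S (init S) [:: z]) = varseq S' (init S') [:: k].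
  by rewrite /= fz.
have [_] := CM3 _ _ zs ks fzk z Sxz; rewrite fz => /(_ S'xk) /= fz'.
rewrite !eqxx in fz'.
have Sz' : rca S (cl (mutate S (init S) z) z).
  by apply: rca_var; exists [:: z]; split; [rewrite /= Sz | exists z].
have := fM _ _ (rca_init Sxz) Sz'; rewrite /= eqxx fz' fz.
by rewrite [z * _]mulrC [k * _]mulrC !divfK.
Qed.

Lemma rcm_exch_poly_rep z j L : uniq L ->
  (forall i, i \in col_supp S (init S) z -> sx S' (f i) -> f i \in L) ->
  (forall i, sx S i -> f i != j) ->
  exists c1 c2 : int, exists m1 m2 : F' -> nat, [/\ m1 j = 0%N, m2 j = 0%N &
    f (Pplus S (init S) z + Pminus S (init S) z) =
    c1%:~R * monomial id L m1 + c2%:~R * monomial id L m2].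
Proof.
move=> uL fL not_j; have [[_ f1 fD fM] [CM1 CM2 _]] := rcm_f.
set Lz := undup (col_supp S (init S) z).
have rep (p : pred int) : exists c : int, exists2 m : F' -> nat,
    \prod_(i <- Lz | sx S i && p (mat (init S) i z)) f i ^+ absz (mat (init S) i z)
    = c%:~R * monomial id L m & m j = 0%N.
  apply: prod_monomial_rep => // i iz /andP[Si _]; last exact: not_j.
  have [S'fi|] : sx S' (f i) \/ is_int (f i); [|left|by right].
    by case/orP: Si => [/CM1[fi|] | /CM2]; [left; rewrite /sx fi | right | ].
  by apply: fL; rewrite // -mem_undup.
have prod_f (p : pred int) :
    rca S (\prod_(i <- Lz | sx S i && p (mat (init S) i z)) i ^+ absz (mat (init S) i z))
    /\ f (\prod_(i <- Lz | sx S i && p (mat (init S) i z)) i ^+ absz (mat (init S) i z))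
       = \prod_(i <- Lz | sx S i && p (mat (init S) i z)) f i ^+ absz (mat (init S) i z).
  by apply: (rca_prod_morph f1 fM) => i /andP[Si _]; apply: rca_init.
have [c1 [m1 E1 m1j]] := rep (fun b => 0 < b).
have [c2 [m2 E2 m2j]] := rep (fun b => b < 0).
have [Spos fpos] := prod_f (fun b => 0 < b).
have [Sneg fneg] := prod_f (fun b => b < 0).
exists c1, c2, m1, m2; split=> //.
by rewrite [Pplus S _ _]/Pplus [Pminus S _ _]/Pminus /= (fD _ _ Spos Sneg) fpos fneg E1 E2.
Qed.

(* If b'_jk <> 0 then x_j occurs in P'_k = f(P_z), whereas every variable of
   f(P_z) lies in f(x) or is an integer. *)
Lemma image_supported_init : image_supported S S' f (init S').
Proof.
move=> k j /andP[S'k /asboolP[z Sz fz]] S'j Tj /=; apply/eqP; apply: contraT => jk.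
have not_j i : sx S i -> f i != j.
  move=> Si; apply: contraNneq Tj => fij; rewrite sx_image S'j /=.
  by apply/asboolP; exists i.
set L := [seq x <- undup ([seq f i | i <- col_supp S (init S) z] ++
                          exch_labels S' (init S') k) | sx S' x].
have uL : uniq L by rewrite filter_uniq ?undup_uniq.
have S'L : all (sx S') L by apply: filter_all.
have labL : {subset exch_labels S' (init S') k <= L}.
  move=> x xlab; rewrite mem_filter mem_undup mem_cat xlab orbT andbT.
  by move: xlab; rewrite mem_filter => /andP[].
have jlab : j \in exch_labels S' (init S') k.
  by case: seedS' => _ _ _ /(_ k S'k) fin _; apply: mem_exch_labels.
have [|c1 [c2 [m1 [m2 [m1j m2j]]]]] := rcm_exch_poly_rep (z := z) uL _ not_j.
  by move=> i iz S'fi; rewrite mem_filter S'fi mem_undup mem_cat map_f.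
rewrite (rcm_exch_poly Sz fz S'k) => E.
have := exch_poly_involves (st := init S') c1 c2 indS' uL S'L labL jlab jk m1j m2j.
by rewrite /= E eqxx.
Qed.

Lemma mutseq_image_init ks : all (sex T) ks ->
  mutseq T (init T) ks = mutseq S' (init S') ks /\
  varseq T (init T) ks = varseq S' (init S') ks.
Proof. exact: mutseq_image image_supported_init. Qed.

Lemma all_sex_image ks : all (sex T) ks -> all (sex S') ks.
Proof. by apply: sub_all => y; apply: sex_image_sex. Qed.

Lemma rcm_inclusion : is_rcm T S' id.
Proof.
have [_ _ _ _ [d [d_gt0 skew_d]]] := seedS'.
have valid0 : valid_state S' d (init S') by split.
split; split=> //.
- move=> a; elim=> [z [ks [Tks [y Ty ->]]]| |a1 a2 _ ? _ ?|a1 _ ?|a1 a2 _ ? _ ?];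
    try by constructor.
  apply: rca_var; exists ks; split; first exact: all_sex_image.
  by exists y; [exact: sx_image_sx Ty | have [->] := mutseq_image_init Tks].
- by move=> y /sex_image_sex Sy; left.
- by move=> y Ty; left; apply: (@sx_image_sx _ _ S S' f); rewrite /sx Ty orbT.
- move=> ks ks' Tks S'ks; rewrite map_id => eq_var y Ty; split.
    by move/(indep_on_not_int indS' (sx_image_sx Ty)).
  have [-> eq_var'] := mutseq_image_init Tks; rewrite eq_var' in eq_var.
  by rewrite (varseq_inj d_gt0 valid0 (all_sex_image Tks) S'ks eq_var).
Qed.

Lemma rcm_onto_image : is_ideal S S' f -> is_rcm S T f.
Proof.
move=> ideal; have [[_ f1 fD fM] [CM1 CM2 CM3]] := rcm_f.
split; split=> //.
- by move=> a Sa; apply/ideal; exists a.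
- move=> y Sy; case: (CM1 y Sy) => [S'fy|]; [left | by right].
  by rewrite /= S'fy /=; apply/asboolP; exists y.
- move=> y Sy; case: (CM2 y Sy) => [S'fy|]; [left | by right].
  by rewrite sx_image S'fy /=; apply/asboolP; exists y; rewrite // /sx Sy orbT.
- move=> ks ks' Sks Tks' eq_var y Sy.
  have [eq_mut eq_var'] := mutseq_image_init Tks'; rewrite eq_var' in eq_var.
  have [CM3i CM3x] := CM3 ks ks' Sks (all_sex_image Tks') eq_var y Sy.
  by split=> // /sx_image_sx S'fy; rewrite eq_mut; apply: CM3x.
Qed.

End RootedClusterMorphism.

Theorem mainTheorem5 (F F' : fieldType) (S : seed F) (S' : seed F')
    (f : F -> F') :
  is_seed S -> is_seed S' -> is_rcm S S' f ->
  (is_rcm (image_seed S S' f) S' id /\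
   (forall a b, rca (image_seed S S' f) a -> rca (image_seed S S' f) b ->
      id a = id b -> a = b)) /\
  (is_ideal S S' f ->
   exists g : F -> F',
     [/\ is_rcm S (image_seed S S' f) g,
         (forall b, rca (image_seed S S' f) b -> exists2 a, rca S a & g a = b) &
         (forall a, rca S a -> f a = id (g a))]).
Proof.
move=> seedS seedS' rcm_f; split; first by split=> //; apply: rcm_inclusion.
move=> ideal; exists f; split=> //; first exact: rcm_onto_image.
by move=> b /ideal.
Qed.
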